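(* Let $k\ge1$ be an integer and $n$ a positive integer with $n>\frac{k+2}{24}$. Then $$\frac{e^{\pi\sqrt{2n/3}}}{4n\sqrt3}\cdot\frac{\widehat L_2(k)}{n^{k/2}}<\frac{\sqrt{12}\,e^{\mu(n)}}{24n-1}\cdot\frac{1}{\mu(n)^k}<\frac{e^{\pi\sqrt{2n/3}}}{4n\sqrt3}\cdot\frac{\widehat U_2(k)}{n^{k/2}},$$ where $\widehat L_2(k)=\frac{1}{\alpha^k\,24^{k/2}}\left(1-\frac{1}{4\sqrt n}\right)$ and $\widehat U_2(k)=\frac{1}{\alpha^k\,24^{k/2}}\left(1+\frac{k}{3n}\right)$.
   Context: $\alpha=\pi/6$ and $\mu(n)=\frac{\pi}{6}\sqrt{24n-1}$. *)

From Stdlib Require Import Reals.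
Open Scope R_scope.

Definition alpha : R := PI / 6.
Definition mu (n : R) : R := PI / 6 * sqrt (24 * n - 1).

(* x^(k/2) for x >= 0 written as (sqrt x)^k *)
Definition L2hat (k : nat) (n : R) : R :=
  / (alpha ^ k * sqrt 24 ^ k) * (1 - 1 / (4 * sqrt n)).
Definition U2hat (k : nat) (n : R) : R :=
  / (alpha ^ k * sqrt 24 ^ k) * (1 + INR k / (3 * n)).

(* Put m = 24 n, X = sqrt m and q = sqrt (m - 1), so that pi sqrt (2n/3) = alpha X,
   mu n = alpha q and X - q = 1 / (X + q).  After factoring out
   exp (alpha X) / (4 n sqrt 3 (alpha X)^k), the middle term becomes
   (X/q)^(k+2) exp (-alpha (X - q)) and the claim is
   1 - 1/(4 sqrt n) < (X/q)^(k+2) exp (-alpha (X - q)) < 1 + k/(3n).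
   The lower bound uses (X/q)^(k+2) >= 1 and exp (-t) >= 1 - t with
   alpha (X - q) < 1 / X < 1 / (4 sqrt n); the upper bound uses exp (-t) < 1 and
   Bernoulli's inequality (q/X)^(k+2) >= 1 - (k+2)(X - q)/X >= 1 - (k+2)/(2m - 1). *)

From Stdlib Require Import Reals Lra Lia Psatz.
Open Scope R_scope.

Lemma bernoulli_pow_ge (w : R) (p : nat) : w <= 1 -> 1 - INR p * w <= (1 - w) ^ p.
Proof.
  intros Hw; induction p as [|p IH]; [simpl; lra|].
  rewrite S_INR; simpl pow.
  assert (0 <= INR p) by apply pos_INR.
  nra.
Qed.

Lemma alpha_pos : 0 < alpha.
Proof. unfold alpha; pose proof PI_RGT_0; lra. Qed.

Lemma alpha_lt_1 : alpha < 1.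
Proof. unfold alpha; pose proof PI_4; lra. Qed.

Lemma PI_sqrt_eq_alpha_sqrt (N : R) :
  0 <= N -> PI * sqrt (2 * N / 3) = alpha * sqrt (24 * N).
Proof.
  intros HN.
  replace (2 * N / 3) with (24 * N / 6 ^ 2) by field.
  rewrite sqrt_div_alt by lra.
  rewrite sqrt_pow2 by lra.
  unfold alpha; field.
Qed.

Lemma mu_eq_alpha_sqrt (N : R) : mu N = alpha * sqrt (24 * N - 1).
Proof. reflexivity. Qed.

Section SqrtGap.

Variable m : R.
Hypothesis Hm : 1 < m.

Let X := sqrt m.
Let q := sqrt (m - 1).

Lemma sqrt_gap_pos : 0 < q /\ q < X.
Proof.
  split; [apply sqrt_lt_R0; lra|].
  apply sqrt_lt_1_alt; lra.
Qed.

Lemma sqrt_gap_eq : (X - q) * (X + q) = 1.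
Proof.
  unfold X, q.
  replace ((sqrt m - sqrt (m - 1)) * (sqrt m + sqrt (m - 1)))
    with (sqrt m * sqrt m - sqrt (m - 1) * sqrt (m - 1)) by ring.
  rewrite !sqrt_sqrt; lra.
Qed.

Lemma sqrt_gap_lt_inv : X - q < / X.
Proof.
  destruct sqrt_gap_pos as [Hq HqX].
  pose proof sqrt_gap_eq.
  apply (Rmult_lt_reg_r X); [lra|].
  rewrite Rinv_l by lra.
  nra.
Qed.

Lemma pow_sqrt_ratio_ge (p : nat) :
  1 - INR p / (2 * m - 1) <= (q / X) ^ p.
Proof.
  destruct sqrt_gap_pos as [Hq HqX].
  pose proof sqrt_gap_eq as Hgap.
  assert (HXX : X * X = m) by (apply sqrt_sqrt; lra).
  assert (Hp : 0 <= INR p) by apply pos_INR.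
  replace (q / X) with (1 - (X - q) / X) by (field; lra).
  eapply Rle_trans; [|apply bernoulli_pow_ge].
  2: { apply (Rmult_le_reg_r X); [lra|]. unfold Rdiv. rewrite Rmult_assoc, Rinv_l; lra. }
  (* (X - q) / X = 1 / (X (X + q)) and X (X + q) >= X^2 + q^2 = 2 m - 1 *)
  assert (Hw : (X - q) / X <= / (2 * m - 1)).
  { apply (Rmult_le_reg_r (X * (2 * m - 1))); [nra|].
    replace ((X - q) / X * (X * (2 * m - 1))) with ((X - q) * (2 * m - 1)) by (field; lra).
    replace (/ (2 * m - 1) * (X * (2 * m - 1))) with X by (field; lra).
    nra. }
  unfold Rdiv at 1; nra.
Qed.

End SqrtGap.

Definition gap_factor (k : nat) (m : R) : R :=
  (sqrt m / sqrt (m - 1)) ^ (k + 2) * exp (- (alpha * (sqrt m - sqrt (m - 1)))).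

Definition scale (k : nat) (N : R) : R :=
  exp (alpha * sqrt (24 * N)) / (4 * N * sqrt 3 * (alpha * sqrt (24 * N)) ^ k).

Lemma scale_pos (k : nat) (N : R) : 0 < N -> 0 < scale k N.
Proof.
  intros HN; pose proof alpha_pos.
  assert (0 < sqrt (24 * N)) by (apply sqrt_lt_R0; lra).
  assert (0 < sqrt 3) by (apply sqrt_lt_R0; lra).
  assert (0 < (alpha * sqrt (24 * N)) ^ k) by (apply pow_lt; nra).
  unfold scale; apply Rdiv_lt_0_compat; [apply exp_pos|].
  repeat apply Rmult_lt_0_compat; lra.
Qed.

Lemma outer_side_eq (k : nat) (N c : R) : 0 < N ->
  exp (PI * sqrt (2 * N / 3)) / (4 * N * sqrt 3)
    * (/ (alpha ^ k * sqrt 24 ^ k) * c / sqrt N ^ k)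
  = scale k N * c.
Proof.
  intros HN; pose proof alpha_pos.
  assert (0 < sqrt 24) by (apply sqrt_lt_R0; lra).
  assert (0 < sqrt N) by (apply sqrt_lt_R0; lra).
  assert (0 < sqrt 3) by (apply sqrt_lt_R0; lra).
  assert (0 < alpha ^ k) by (apply pow_lt; lra).
  assert (0 < sqrt 24 ^ k) by (apply pow_lt; lra).
  assert (0 < sqrt N ^ k) by (apply pow_lt; lra).
  rewrite PI_sqrt_eq_alpha_sqrt by lra.
  unfold scale; rewrite sqrt_mult by lra.
  rewrite !Rpow_mult_distr.
  field; repeat split; lra.
Qed.

Lemma middle_eq (k : nat) (N : R) : 1 < 24 * N ->
  sqrt 12 * exp (mu N) / (24 * N - 1) * (1 / mu N ^ k)
  = scale k N * gap_factor k (24 * N).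
Proof.
  intros HN; pose proof alpha_pos.
  destruct (sqrt_gap_pos (24 * N) HN) as [Hq HqX].
  set (X := sqrt (24 * N)) in *; set (q := sqrt (24 * N - 1)) in *.
  assert (HXX : X * X = 24 * N) by (apply sqrt_sqrt; lra).
  assert (Hqq : q * q = 24 * N - 1) by (apply sqrt_sqrt; lra).
  assert (Hc : 0 < sqrt 3) by (apply sqrt_lt_R0; lra).
  assert (Hcc : sqrt 3 * sqrt 3 = 3) by (apply sqrt_sqrt; lra).
  assert (H12 : sqrt 12 = 2 * sqrt 3) by (apply sqrt_lem_1; nra).
  assert (0 < alpha ^ k) by (apply pow_lt; lra).
  assert (0 < q ^ k) by (apply pow_lt; lra).
  assert (0 < X ^ k) by (apply pow_lt; lra).
  rewrite mu_eq_alpha_sqrt, H12; fold q.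
  unfold scale, gap_factor; fold X q.
  assert (Hsplit : exp (alpha * X) = exp (alpha * q) * exp (alpha * (X - q))).
  { rewrite <- exp_plus; f_equal; ring. }
  assert (0 < exp (alpha * q)) by apply exp_pos.
  assert (0 < exp (alpha * (X - q))) by apply exp_pos.
  rewrite exp_Ropp, Hsplit.
  replace ((X / q) ^ (k + 2)) with (X ^ k * (X * X) / (q ^ k * (q * q)))
    by (rewrite pow_add; unfold Rdiv; rewrite Rpow_mult_distr, pow_inv; simpl; field; lra).
  rewrite <- Hqq, !Rpow_mult_distr.
  replace (4 * N) with (X * X / (2 * (sqrt 3 * sqrt 3))) by (rewrite Hcc; lra).
  field; repeat split; lra.
Qed.

Lemma gap_factor_gt (k : nat) (N : R) : 1 < 24 * N ->
  1 - 1 / (4 * sqrt N) < gap_factor k (24 * N).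
Proof.
  intros HN; pose proof alpha_pos; pose proof alpha_lt_1.
  pose proof (sqrt_gap_lt_inv (24 * N) HN) as Hd.
  destruct (sqrt_gap_pos (24 * N) HN) as [Hq HqX].
  set (X := sqrt (24 * N)) in *; set (q := sqrt (24 * N - 1)) in *.
  assert (Hs : 0 < sqrt N) by (apply sqrt_lt_R0; lra).
  assert (HX4 : 4 * sqrt N < X).
  { unfold X; rewrite sqrt_mult by lra.
    apply Rmult_lt_compat_r; [lra|].
    rewrite <- (sqrt_square 4) by lra; apply sqrt_lt_1_alt; lra. }
  assert (Hpow : 1 <= (X / q) ^ (k + 2)).
  { apply pow_R1_Rle; apply (Rmult_le_reg_r q); [lra|].
    unfold Rdiv; rewrite Rmult_assoc, Rinv_l; lra. }
  assert (Hexp : 1 - alpha * (X - q) <= exp (- (alpha * (X - q)))).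
  { pose proof (exp_ineq1_le (- (alpha * (X - q)))); lra. }
  assert (Hinv : / X < 1 / (4 * sqrt N)).
  { unfold Rdiv; rewrite Rmult_1_l; apply Rinv_lt_contravar; nra. }
  unfold gap_factor; fold X q.
  assert (0 < exp (- (alpha * (X - q)))) by apply exp_pos.
  nra.
Qed.

Lemma gap_correction_le (K N : R) : 1 <= K -> K + 3 <= 24 * N ->
  1 <= (1 + K / (3 * N)) * (1 - (K + 2) / (2 * (24 * N) - 1)).
Proof.
  intros HK HKN.
  assert (HN : 0 < N) by lra.
  replace ((1 + K / (3 * N)) * (1 - (K + 2) / (2 * (24 * N) - 1)))
    with ((24 * N + 8 * K) * (48 * N - K - 3) / (24 * N * (48 * N - 1)))
    by (field; lra).
  apply (Rmult_le_reg_r (24 * N * (48 * N - 1))); [nra|].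
  replace ((24 * N + 8 * K) * (48 * N - K - 3) / (24 * N * (48 * N - 1))
             * (24 * N * (48 * N - 1)))
    with ((24 * N + 8 * K) * (48 * N - K - 3)) by (field; nra).
  nra.
Qed.

Lemma gap_factor_lt (k : nat) (N : R) : (1 <= k)%nat -> INR k + 3 <= 24 * N ->
  gap_factor k (24 * N) < 1 + INR k / (3 * N).
Proof.
  intros Hk HkN.
  apply le_INR in Hk; simpl INR in Hk.
  assert (HN : 1 < 24 * N) by lra.
  pose proof alpha_pos.
  pose proof (pow_sqrt_ratio_ge (24 * N) HN (k + 2)) as Hb.
  pose proof (gap_correction_le (INR k) N Hk HkN) as Hc.
  rewrite plus_INR in Hb; replace (INR 2) with 2 in Hb by (simpl; lra).
  destruct (sqrt_gap_pos (24 * N) HN) as [Hq HqX].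
  set (X := sqrt (24 * N)) in *; set (q := sqrt (24 * N - 1)) in *.
  set (c := 1 - (INR k + 2) / (2 * (24 * N) - 1)) in *.
  set (G := 1 + INR k / (3 * N)) in *.
  assert (Hexp : exp (- (alpha * (X - q))) < 1).
  { rewrite <- exp_0; apply exp_increasing; nra. }
  assert (Hinv : (X / q) ^ (k + 2) * (q / X) ^ (k + 2) = 1).
  { rewrite <- Rpow_mult_distr; replace (X / q * (q / X)) with 1 by (field; lra).
    apply pow1. }
  assert (0 < (X / q) ^ (k + 2)) by (apply pow_lt; apply Rdiv_lt_0_compat; lra).
  assert (0 < G) by (unfold G; assert (0 < INR k / (3 * N)) by (apply Rdiv_lt_0_compat; lra); lra).
  assert (0 < c) by nra.
  assert (HAc : (X / q) ^ (k + 2) * c <= G * c) by nra.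
  assert (HA : (X / q) ^ (k + 2) <= G) by (apply (Rmult_le_reg_r c); lra).
  unfold gap_factor; fold X q.
  assert (0 < exp (- (alpha * (X - q)))) by apply exp_pos.
  nra.
Qed.

Lemma integrality_bound (k n : nat) :
  INR n > (INR k + 2) / 24 -> INR k + 3 <= 24 * INR n.
Proof.
  intros H.
  assert (Hlt : (k + 2 < 24 * n)%nat).
  { apply INR_lt; rewrite plus_INR, mult_INR; simpl INR; lra. }
  assert (Hle : (k + 3 <= 24 * n)%nat) by lia.
  apply le_INR in Hle; rewrite plus_INR, mult_INR in Hle; simpl INR in Hle; lra.
Qed.

Theorem mainTheorem15 (k n : nat) :
  (1 <= k)%nat -> (0 < n)%nat -> INR n > (INR k + 2) / 24 ->
  let N := INR n in
  exp (PI * sqrt (2 * N / 3)) / (4 * N * sqrt 3) * (L2hat k N / sqrt N ^ k)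
    < sqrt 12 * exp (mu N) / (24 * N - 1) * (1 / mu N ^ k)
  /\
  sqrt 12 * exp (mu N) / (24 * N - 1) * (1 / mu N ^ k)
    < exp (PI * sqrt (2 * N / 3)) / (4 * N * sqrt 3) * (U2hat k N / sqrt N ^ k).
Proof.
  intros Hk _ Hnk N.
  pose proof (integrality_bound k n Hnk) as HkN; fold N in HkN.
  assert (H1 : 1 <= INR k) by (apply le_INR in Hk; exact Hk).
  assert (HN : 1 < 24 * N) by lra.
  unfold L2hat, U2hat.
  rewrite !outer_side_eq, middle_eq by lra.
  pose proof (scale_pos k N ltac:(lra)).
  split; apply Rmult_lt_compat_l; auto.
  - exact (gap_factor_gt k N HN).
  - exact (gap_factor_lt k N Hk HkN).
Qed.
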